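(* For all natural numbers $P, N, m \geq 1$ and every real number $x \geq 1$, one has $$\Big|\sum_{n \leq x:\, (n,P)=1} \frac{\mu(n)}{n}\Big| \leq 1, \qquad \Big|\sum_{n \mid N:\, n \leq x} \frac{\mu(n)}{n}\Big| \leq 1, \qquad \Big|\sum_{n \leq x} \frac{\mu(mn)}{n}\Big| \leq 1,$$ where $n$ ranges over natural numbers.
   Context: $\mu$ denotes the Möbius function: $\mu(n) = (-1)^k$ if $n$ is a product of $k$ distinct primes, and $\mu(n)=0$ otherwise. $(n,P)$ denotes the greatest common divisor of $n$ and $P$. *)

From mathcomp Require Import all_boot all_order all_algebra.
From mathcomp Require Import reals.
Set Implicit Arguments. Unset Strict Implicit. Unset Printing Implicit Defensive.

(* Moebius function: mu 0 = 0 (convention, never used at 0 in the theorem),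
   mu n = (-1)^k if n >= 1 is a product of k distinct primes, 0 otherwise. *)
Definition squarefree (n : nat) : bool := all (fun p => logn p n == 1%N) (primes n).

Definition mobius (n : nat) : int :=
  if (n == 0)%N then 0%R
  else if squarefree n then ((-1) ^+ size (primes n))%R else 0%R.

From mathcomp Require Import all_boot all_order all_algebra.
From mathcomp Require Import reals.
From mathcomp Require Import lra.

Set Implicit Arguments.
Unset Strict Implicit.
Unset Printing Implicit Defensive.
Import Order.TTheory GRing.Theory Num.Theory.

(* Let a be mu restricted to the integers coprime to P (or to the divisors of
   N), and s(n) = sum_{d | n} a(d).  Then s(n) = [g(n) = 1], where g(n) is the
   largest divisor of n in the support of a, so 0 <= s(n) <= 1 and s(n) = 0
   whenever n > 1 and a(n) <> 0.  Summing s over n <= x and exchanging sums,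
   x * sum_{d <= x} a(d)/d = sum_{n <= x} (s(n) + a(n) {x/n}); every term has
   absolute value at most 1, except the one for n = 1 which is at most 1 + {x},
   so the whole is at most floor(x) + {x} = x.  The third sum is mu(m) times
   the first one with P = m, as mu(mn) = mu(m) mu(n) [(m, n) = 1]. *)

Lemma primes_primeM p n : prime p -> (0 < n)%N -> ~~ (p %| n) ->
  perm_eq (primes (p * n)) (p :: primes n).
Proof.
move=> pr_p n_gt0 pNn; apply: uniq_perm; rewrite ?primes_uniq //=.
  by rewrite primes_uniq andbT mem_primes pr_p n_gt0.
by move=> q; rewrite (primesM _ (prime_gt0 pr_p) n_gt0) (primes_prime pr_p) !inE.
Qed.

Lemma mobius_primeM p n : prime p -> (0 < n)%N -> ~~ (p %| n) ->
  mobius (p * n) = (- mobius n)%R.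
Proof.
move=> pr_p n_gt0 pNn; have p_gt0 := prime_gt0 pr_p.
have primes_pn := primes_primeM pr_p n_gt0 pNn.
rewrite /mobius muln_eq0 !gtn_eqF //.
have -> : squarefree (p * n) = squarefree n.
  rewrite /squarefree (perm_all _ primes_pn) /= lognM // logn_prime // eqxx.
  rewrite (_ : logn p n = 0%N) /=; last first.
    by apply/eqP; rewrite -leqn0 leqNgt logn_gt0 mem_primes pr_p n_gt0.
  apply: eq_in_all => q; rewrite mem_primes => /and3P[pr_q _ qn].
  rewrite lognM // logn_prime //.
  by case: (eqVneq q p) => [eq_qp|//]; move: pNn; rewrite -eq_qp qn.
case: (squarefree n); last by rewrite oppr0.
by rewrite (perm_size primes_pn) exprS mulN1r.
Qed.

Lemma mobius_primeM_dvd p n : prime p -> (0 < n)%N -> p %| n -> mobius (p * n) = 0%R.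
Proof.
move=> pr_p n_gt0 pn; have p_gt0 := prime_gt0 pr_p.
rewrite /mobius muln_eq0 !gtn_eqF //= /squarefree.
suff /negbTE-> : ~~ all (fun q => logn q (p * n) == 1%N) (primes (p * n)) by [].
apply/allPn; exists p; first by rewrite mem_primes pr_p muln_gt0 p_gt0 n_gt0 dvdn_mulr.
by rewrite lognM // logn_prime // eqxx -[1%N]addn0 eqn_add2l -lt0n logn_gt0 mem_primes pr_p n_gt0.
Qed.

Lemma mobius_norm_le1 n : (`|mobius n| <= 1)%R.
Proof.
rewrite /mobius; case: (n == 0)%N => //; case: (squarefree n) => //.
by rewrite normrX normrN normr1 expr1n.
Qed.

Lemma perm_divisors_dvd p k : (0 < p)%N -> (0 < k)%N ->
  perm_eq [seq d <- divisors (p * k) | p %| d] [seq p * e | e <- divisors k].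
Proof.
move=> p_gt0 k_gt0; have pk_gt0 : (0 < p * k)%N by rewrite muln_gt0 p_gt0.
apply: uniq_perm; first exact/filter_uniq/divisors_uniq.
  by rewrite map_inj_uniq ?divisors_uniq // => a b /eqP; rewrite eqn_pmul2l // => /eqP.
move=> d; rewrite mem_filter -dvdn_divisors //; apply/andP/mapP.
  case=> /dvdnP[e ->] ek; exists e; last by rewrite mulnC.
  by rewrite -dvdn_divisors // -(@dvdn_pmul2l p) // mulnC.
by case=> e; rewrite -dvdn_divisors // => ek ->; rewrite dvdn_mulr // dvdn_pmul2l.
Qed.

Lemma perm_divisors_coprime p k : prime p -> (0 < k)%N ->
  perm_eq [seq d <- divisors (p * k) | ~~ (p %| d)] [seq d <- divisors k | ~~ (p %| d)].
Proof.
move=> pr_p k_gt0; have pk_gt0 : (0 < p * k)%N by rewrite muln_gt0 prime_gt0.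
apply: uniq_perm; rewrite ?filter_uniq ?divisors_uniq // => d.
rewrite !mem_filter -!dvdn_divisors //; case: (boolP (p %| d)) => //= pNd.
by rewrite Gauss_dvdr // coprime_sym prime_coprime.
Qed.

Lemma sum_mobius_divisors k : (0 < k)%N ->
  (\sum_(d <- divisors k) mobius d = (k == 1)%N%:R)%R.
Proof.
move=> k_gt0; case: (ltngtP k 1) => [|k_gt1|->]; first by rewrite ltnNge k_gt0.
  2: by rewrite big_seq1.
have /dvdnP[k' def_k] := pdiv_dvd k; have pr_p := pdiv_prime k_gt1.
move: (pdiv k) pr_p def_k => p pr_p def_k.
have k'_gt0 : (0 < k')%N by move: k_gt0; rewrite def_k muln_gt0 => /andP[].
rewrite def_k mulnC (bigID (dvdn p)) /= -big_filter -[X in (_ + X)%R]big_filter.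
rewrite (perm_big _ (perm_divisors_dvd (prime_gt0 pr_p) k'_gt0)) big_map.
rewrite (perm_big _ (perm_divisors_coprime pr_p k'_gt0)) big_filter.
rewrite [X in (_ + X)%R]big_mkcond -big_split /=.
rewrite big1_seq // => e /andP[_]; rewrite -dvdn_divisors // => ek.
have e_gt0 := dvdn_gt0 k'_gt0 ek.
case: (boolP (p %| e)) => pe /=; first by rewrite mobius_primeM_dvd ?addr0.
by rewrite mobius_primeM ?addNr.
Qed.

Lemma mobiusM m n : (0 < m)%N -> (0 < n)%N ->
  mobius (m * n) = (if coprime m n then mobius m * mobius n else 0)%R.
Proof.
elim: m {-2}m (leqnn m) n => [|M IH] m; first by rewrite leqn0 => /eqP->.
move=> le_mM n m_gt0 n_gt0; case: (ltngtP m 1) => [|m_gt1|->]; first by rewrite ltnNge m_gt0.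
  2: by rewrite mul1n coprime1n mul1r.
have /dvdnP[m' def_m] := pdiv_dvd m; have pr_p := pdiv_prime m_gt1.
move: (pdiv m) pr_p def_m => p pr_p def_m; have p_gt0 := prime_gt0 pr_p.
have m'_gt0 : (0 < m')%N by move: m_gt0; rewrite def_m muln_gt0 => /andP[].
have le_m'M : (m' <= M)%N by rewrite -ltnS (leq_trans _ le_mM) // def_m ltn_Pmulr ?prime_gt1.
rewrite def_m (mulnC m') -mulnA coprimeMl (prime_coprime n pr_p).
have m'n_gt0 : (0 < m' * n)%N by rewrite muln_gt0 m'_gt0.
have [pm'|pNm'] := boolP (p %| m').
  by rewrite !(mobius_primeM_dvd pr_p) ?dvdn_mulr // mul0r if_same.
have [pn|pNn] := boolP (p %| n).
  by rewrite (mobius_primeM_dvd pr_p) ?dvdn_mull.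
rewrite !(mobius_primeM pr_p) ?Euclid_dvdM ?negb_or ?pNm' // IH //=.
by case: ifP; rewrite ?oppr0 // mulNr.
Qed.

Lemma big_dvdn_divisors (R : Type) (idx : R) (op : Monoid.com_law idx) n (F : nat -> R) :
  (0 < n)%N ->
  \big[op/idx]_(1 <= d < n.+1 | d %| n) F d = \big[op/idx]_(d <- divisors n) F d.
Proof.
move=> n_gt0; rewrite -big_filter; apply: perm_big; apply: uniq_perm.
- exact/filter_uniq/iota_uniq.
- exact: divisors_uniq.
move=> d; rewrite mem_filter mem_index_iota -dvdn_divisors //.
by apply/andP/idP => [[]//|dn]; rewrite (dvdn_gt0 n_gt0 dn) ltnS dvdn_leq.
Qed.

Lemma sum_mobius_divisors_on n g (Q : pred nat) : (0 < n)%N -> (0 < g)%N ->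
  (forall d, (d %| n) && Q d = (d %| g)) ->
  (\sum_(d <- divisors n | Q d) mobius d = (g == 1)%N%:R)%R.
Proof.
move=> n_gt0 g_gt0 dvd_g; rewrite -sum_mobius_divisors // -big_filter.
apply: perm_big; apply: uniq_perm; rewrite ?filter_uniq ?divisors_uniq // => d.
by rewrite mem_filter -!dvdn_divisors // andbC.
Qed.

Local Open Scope ring_scope.

Definition divisor_sum (V : nmodType) (a : nat -> V) n :=
  \sum_(1 <= d < n.+1 | (d %| n)%N) a d.

Lemma sum_dvdn_const (V : nmodType) (v : V) K d : (0 < d)%N ->
  \sum_(1 <= n < K.+1 | (d %| n)%N) v = v *+ (K %/ d).
Proof.
move=> d_gt0; elim: K => [|K IH]; first by rewrite big_geq // div0n.
rewrite big_mkcond big_nat_recr //= -big_mkcond IH divnS // mulrnDr addrC.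
by case: (d %| K.+1)%N.
Qed.

Lemma sum_divisor_sum (V : nmodType) (a : nat -> V) K :
  \sum_(1 <= n < K.+1) divisor_sum a n = \sum_(1 <= d < K.+1) a d *+ (K %/ d).
Proof.
have -> : \sum_(1 <= d < K.+1) a d *+ (K %/ d) =
    \sum_(1 <= d < K.+1) \sum_(1 <= n < K.+1) (if (d %| n)%N then a d else 0).
  by apply: eq_big_nat => d /andP[d_gt0 _]; rewrite -big_mkcond sum_dvdn_const.
rewrite exchange_big_nat /=; apply: eq_big_nat => n /andP[n_gt0 le_nK].
rewrite /divisor_sum big_mkcond [RHS](big_cat_nat _ (n := n.+1)) //=.
rewrite [X in _ + X]big1_seq ?addr0 //.
move=> d /andP[_]; rewrite mem_index_iota => /andP[lt_nd _].
by rewrite ifN // gtnNdvd.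
Qed.

Lemma divn_truncn_itv (R : archiFieldType) (x : R) d : 0 <= x -> (0 < d)%N ->
  (Num.truncn x %/ d)%:R <= x / d%:R <= (Num.truncn x %/ d)%:R + 1.
Proof.
move=> x_ge0 d_gt0; have d_pos : 0 < d%:R :> R by rewrite ltr0n.
have /andP[le_Kx lt_xK] := truncn_itv x_ge0.
rewrite ler_pdivlMr // ler_pdivrMr // -natrM (le_trans _ le_Kx) ?ler_nat ?leq_divM //=.
by rewrite (le_trans (ltW lt_xK)) // natr1 -natrM ler_nat ltn_ceil.
Qed.

Lemma norm_sum_div_le1 (R : archiFieldType) (a : nat -> R) (x : R) : 1 <= x ->
  (forall n, `|a n| <= 1) ->
  (forall n, (0 < n)%N -> 0 <= divisor_sum a n <= 1) ->
  (forall n, (1 < n)%N -> a n != 0 -> divisor_sum a n = 0) ->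
  `| \sum_(1 <= n < (Num.truncn x).+1) a n / n%:R | <= 1.
Proof.
move=> x_ge1 a_le1 s_itv s_eq0; have x_gt0 : 0 < x by apply: lt_le_trans x_ge1.
set K := Num.truncn x; have K_gt0 : (0 < K)%N by rewrite truncn_gt0.
set s := divisor_sum a; set r := fun d => x / d%:R - (K %/ d)%:R.
(* [r d] is the fractional part of [x / d], as [truncn (x / d) = truncn x %/ d]. *)
have r_itv d : (0 < d)%N -> 0 <= r d <= 1.
  by move=> d_gt0; have := divn_truncn_itv (ltW x_gt0) d_gt0; rewrite /r; lra.
have term_le d : (0 < d)%N -> `|s d + a d * r d| <= 1 + r d.
  move=> d_gt0; have /andP[r_ge0 _] := r_itv d d_gt0.
  have /andP[s_ge0 s_le1] := s_itv d d_gt0.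
  rewrite (le_trans (ler_normD _ _)) // lerD ?(ger0_norm s_ge0) // normrM (ger0_norm r_ge0).
  by rewrite ler_piMl.
have term_le1 d : (1 < d)%N -> `|s d + a d * r d| <= 1.
  move=> d_gt1; have /andP[r_ge0 r_le1] := r_itv d (ltnW d_gt1).
  have [a_eq0|a_neq0] := eqVneq (a d) 0.
    by rewrite a_eq0 mul0r addr0 ger0_norm; have := s_itv d (ltnW d_gt1); case/andP.
  by rewrite /s s_eq0 // add0r normrM (ger0_norm r_ge0) mulr_ile1 ?normr_ge0.
have xT : x * \sum_(1 <= n < K.+1) a n / n%:R = \sum_(1 <= n < K.+1) (s n + a n * r n).
  rewrite big_split /= sum_divisor_sum mulr_sumr -big_split /=.
  apply: eq_big_nat => n _.
  by rewrite /r -[a n *+ _]mulr_natr mulrBr addrC subrK mulrCA.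
have r1 : r 1%N = x - K%:R by rewrite /r divr1 divn1.
have head_le := term_le 1%N isT; rewrite r1 in head_le.
have tail_le : \sum_(2 <= n < K.+1) `|s n + a n * r n| <= K%:R - 1.
  have -> : K%:R - 1 = (K.+1 - 2)%:R :> R.
    by rewrite subSS subn1 -{1}(prednK K_gt0) -natr1 addrK.
  by rewrite -sumr_const_nat; apply: ler_sum_nat => n /andP[n_gt1 _]; apply: term_le1.
rewrite -(ler_pM2l x_gt0) mulr1 -{1}(gtr0_norm x_gt0) -normrM xT.
rewrite (le_trans (ler_norm_sum _ _ _)) // big_ltn // r1; lra.
Qed.

Lemma norm_sum_mobius_on_le1 (R : archiFieldType) (Q : pred nat) (g : nat -> nat) (x : R) :
  1 <= x -> (forall n, (0 < n)%N -> (0 < g n)%N) ->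
  (forall n d, (0 < n)%N -> ((d %| n) && Q d = (d %| g n))%N) ->
  `| \sum_(1 <= n < (Num.truncn x).+1 | Q n) ((mobius n)%:~R / n%:R : R) | <= 1.
Proof.
move=> x_ge1 g_gt0 dvd_g.
pose a n : R := if Q n then (mobius n)%:~R else 0.
have sum_a n : (0 < n)%N -> divisor_sum a n = ((g n == 1)%N)%:R.
  move=> n_gt0; rewrite /divisor_sum big_dvdn_divisors // -big_mkcond -rmorph_sum /=.
  by rewrite (sum_mobius_divisors_on n_gt0 (g_gt0 n n_gt0) (dvd_g n ^~ n_gt0)) rmorph_nat.
have -> : \sum_(1 <= n < (Num.truncn x).+1 | Q n) (mobius n)%:~R / n%:R =
    \sum_(1 <= n < (Num.truncn x).+1) a n / n%:R.
  by rewrite big_mkcond; apply: eq_bigr => n _; rewrite /a; case: (Q n); rewrite ?mul0r.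
apply: norm_sum_div_le1 => // [n | n n_gt0 | n n_gt1].
- by rewrite /a; case: (Q n); rewrite ?normr0 // -intr_norm lerz1 mobius_norm_le1.
- by rewrite sum_a //; case: (g n == 1)%N; rewrite ?lexx ?ler01.
have n_gt0 := ltnW n_gt1; rewrite /a; case: ifP => [Qn _|]; last by rewrite eqxx.
have /andP[gn_dvd _] : ((g n %| n) && Q (g n))%N by rewrite dvd_g.
have n_dvd : (n %| g n)%N by rewrite -dvd_g // dvdnn.
have /eqP gn_eq : g n == n by rewrite eqn_dvd gn_dvd.
by rewrite sum_a // gn_eq gtn_eqF.
Qed.

Lemma dvdn_coprime_part P n d : (0 < P)%N -> (0 < n)%N ->
  ((d %| n) && coprime d P = (d %| n`_(\pi(P))^'))%N.
Proof.
move=> P_gt0 n_gt0; have [->|d_gt0] := posnP d; first by rewrite !dvd0n !gtn_eqF ?part_gt0.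
rewrite coprime_sym (coprime_pi' P_gt0 d_gt0).
apply/andP/idP => [[dn pi'_d]|d_dvd]; first by rewrite -(part_pnat_id pi'_d) partn_dvd.
by rewrite (dvdn_trans d_dvd (dvdn_part _ _)) (pnat_dvd d_dvd (part_pnat _ _)).
Qed.

Lemma norm_sum_mobius_coprime_le1 (R : archiFieldType) P (x : R) : (0 < P)%N -> 1 <= x ->
  `| \sum_(1 <= n < (Num.truncn x).+1 | coprime n P) ((mobius n)%:~R / n%:R : R) | <= 1.
Proof.
move=> P_gt0 x_ge1.
apply: (norm_sum_mobius_on_le1 (g := fun n => (n`_(\pi(P))^')%N)) => // n d.
exact: dvdn_coprime_part.
Qed.

Lemma norm_sum_mobius_dvdn_le1 (R : archiFieldType) N (x : R) : 1 <= x ->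
  `| \sum_(1 <= n < (Num.truncn x).+1 | (n %| N)%N) ((mobius n)%:~R / n%:R : R) | <= 1.
Proof.
move=> x_ge1; apply: (norm_sum_mobius_on_le1 (g := gcdn ^~ N)) => // n.
  by move=> n_gt0; rewrite gcdn_gt0 n_gt0.
by move=> d _; rewrite dvdn_gcd.
Qed.

Lemma norm_sum_mobiusM_le1 (R : archiFieldType) m (x : R) : (0 < m)%N -> 1 <= x ->
  `| \sum_(1 <= n < (Num.truncn x).+1) ((mobius (m * n))%:~R / n%:R : R) | <= 1.
Proof.
move=> m_gt0 x_ge1.
have -> : \sum_(1 <= n < (Num.truncn x).+1) ((mobius (m * n))%:~R / n%:R : R) =
    (mobius m)%:~R * \sum_(1 <= n < (Num.truncn x).+1 | coprime n m) (mobius n)%:~R / n%:R.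
  rewrite mulr_sumr [RHS]big_mkcond; apply: eq_big_nat => n /andP[n_gt0 _].
  by rewrite mobiusM // coprime_sym; case: ifP; rewrite ?mul0r ?mulr0 // intrM mulrA.
rewrite normrM -[X in _ <= X]mulr1 ler_pM ?normr_ge0 ?norm_sum_mobius_coprime_le1 //.
by rewrite -intr_norm lerz1 mobius_norm_le1.
Qed.

Lemma big_nat_truncn (R : archiFieldType) (x : R) (F : nat -> R) : 0 <= x ->
  \sum_(1 <= n < (Num.truncn x).+1 | n%:R <= x) F n = \sum_(1 <= n < (Num.truncn x).+1) F n.
Proof.
move=> x_ge0; rewrite big_nat_cond [RHS]big_nat_cond; apply: eq_bigl => n.
by case/boolP: (_ <= n < _)%N => //= /andP[_]; rewrite ltnS truncn_ge_nat.
Qed.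

Theorem mainTheorem2 (R : realType) (P N m : nat) (x : R) :
  (1 <= P)%N -> (1 <= N)%N -> (1 <= m)%N -> 1 <= x ->
  [/\ `| \sum_(1 <= n < (Num.truncn x).+1 | (n%:R <= x) && coprime n P)
          ((mobius n)%:~R / n%:R : R) | <= 1,
      `| \sum_(1 <= n < (Num.truncn x).+1 | (n%:R <= x) && (n %| N)%N)
          ((mobius n)%:~R / n%:R : R) | <= 1
    & `| \sum_(1 <= n < (Num.truncn x).+1 | n%:R <= x)
          ((mobius (m * n))%:~R / n%:R : R) | <= 1 ].
Proof.
move=> P_gt0 _ m_gt0 x_ge1; have x_ge0 := le_trans ler01 x_ge1.
rewrite !big_mkcondr !big_nat_truncn // -!big_mkcond; split.
- exact: norm_sum_mobius_coprime_le1.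
- exact: norm_sum_mobius_dvdn_le1.
- exact: norm_sum_mobiusM_le1.
Qed.
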